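(* Let $n\ge2$, $1\le k\le n-1$, $N=\binom n2$, and let $(s_t)_{t\in\mathbb Z}$ be the periodic extension of a uniformly random sorting network in $\Omega_n$. Let $\mathrm{Sp}_{k,n}=Y-X$ with $X=\max\{t\le0:s_t=k\}$, $Y=\min\{t>0:s_t=k\}$; let $\widehat{\mathrm{Sp}}_{k,n}$ have the conditional law of $\min\{t>0:s_t=k\}$ given $\{s_0=k\}$; let $\mathbf T_{FS,n}(k)=\min\{t\ge1:s_t=k\}$. Put $f'_1(L)=\mathbb P(\mathrm{Sp}_{k,n}=L)$, $f'_2(L)=\mathbb P(\widehat{\mathrm{Sp}}_{k,n}=L)$, $g'(L)=\mathbb P(\mathbf T_{FS,n}(k)=L)$, $\Delta g'(L)=g'(L+1)-g'(L)$, and $M=\mathbb P(s_1=k)=|\{\omega\in\Omega_n:s_1=k\}|/|\Omega_n|$. Then for all $L\ge1$, $$-\Delta g'(L)\cdot L=f'_1(L),\qquad -\Delta g'(L)=M\cdot f'_2(L).$$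
   Context: $\tau_k=(k,k+1)\in\mathfrak S_n$. A sorting network of size $n$ is $(s_1,\dots,s_N)$, $s_i\in\{1,\dots,n-1\}$, with $\tau_{s_1}\cdots\tau_{s_N}=(n\ n-1\ \dots\ 2\ 1)$; $\Omega_n$ is the set of them, with the uniform measure. Its periodic extension is $(s_t)_{t\in\mathbb Z}$ with $s_{t+N}=n-s_t$ for all $t$ (a $2N$-periodic sequence). *)

From mathcomp Require Import all_boot all_order all_algebra.
Unset Printing Implicit Defensive.
Import Order.TTheory GRing.Theory Num.Theory.

Definition NN (n : nat) : nat := 'C(n, 2).

(* right multiplication of a word (one-line notation, 0-indexed positions)
   by the adjacent transposition tau_i = (i, i+1), i >= 1 (1-indexed values). *)
Definition tau_pos (i j : nat) : nat :=
  if j == i.-1 then i else if j == i then i.-1 else j.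
Definition swap_adj (l : seq nat) (i : nat) : seq nat :=
  [seq nth 0 l (tau_pos i j) | j <- iota 0 (size l)].

Definition word_of (n : nat) (s : seq nat) : seq nat :=
  foldl swap_adj (iota 1 n) s.

(* candidate words: N-tuples with entries in {0,..,n-1}; sorting networks
   additionally have entries >= 1 and product equal to the reversal n n-1 ... 1 *)
Definition is_sorting_network (n : nat) (w : (NN n).-tuple 'I_n) : bool :=
  all (fun i : 'I_n => 0 < i) w &&
  (word_of n [seq val i | i <- w] == rev (iota 1 n)).

Definition Omega (n : nat) : {set (NN n).-tuple 'I_n} :=
  [set w | is_sorting_network n w].

(* periodic extension: s_t for t = 1..N is the network, s_{t+N} = n - s_t *)
Definition ext (n : nat) (w : (NN n).-tuple 'I_n) (t : int) : nat :=
  let m := (t - 1)%R in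
  let q := (m %/ (NN n)%:Z)%Z in
  let r := `|(m %% (NN n)%:Z)%Z|%N in
  let b := nth 0 [seq val i | i <- w] r in
  if odd `|q|%N then n - b else b.

Definition Pr {n : nat} (E : pred ((NN n).-tuple 'I_n)) : rat :=
  (#|[set w in Omega n | E w]|%:R / #|Omega n|%:R)%R.

(* the event {Sp_{k,n} = L}: X = max{t<=0 : s_t = k} = -i, Y = min{t>0 : s_t=k} = L - i *)
Definition Sp_event (n k L : nat) (w : (NN n).-tuple 'I_n) : bool :=
  [exists i : 'I_L,
     let X := (- (i%:Z))%R in
     [&& ext n w X == k, ext n w (X + L%:Z)%R == k &
         [forall j : 'I_L, (0 < j)%N ==> (ext n w (X + j%:Z)%R != k)]]].

Definition Sphat_joint_event (n k L : nat) (w : (NN n).-tuple 'I_n) : bool :=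
  [&& ext n w 0 == k, ext n w L%:Z == k &
      [forall j : 'I_L, (0 < j)%N ==> (ext n w j%:Z != k)]].

Definition TFS_event (n k L : nat) (w : (NN n).-tuple 'I_n) : bool :=
  (0 < L)%N && (ext n w L%:Z == k) &&
  [forall j : 'I_L, (0 < j)%N ==> (ext n w j%:Z != k)].

Definition f1 (n k L : nat) : rat := Pr (n:=n) (Sp_event n k L).
Definition f2 (n k L : nat) : rat :=
  (Pr (n:=n) (Sphat_joint_event n k L) / Pr (n:=n) (fun w => ext n w 0 == k))%R.
Definition g (n k L : nat) : rat := Pr (n:=n) (TFS_event n k L).
Definition Mk (n k : nat) : rat := Pr (n:=n) (fun w => ext n w 1 == k).

From mathcomp Require Import all_boot all_order all_algebra.
From mathcomp Require Import zify ring.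
Import Order.TTheory GRing.Theory Num.Theory.

(* Rotating a sorting network, (s_1, ..., s_N) |-> (s_2, ..., s_N, n - s_1),
   is a bijection of Omega_n that shifts the periodic extension by one step, so
   the law of (s_t) is stationary.  Splitting {T_FS(k) = L} according to
   whether s_0 = k and shifting the second part gives
   g'(L) = P(s_0 = k, first return to k at L) + g'(L+1); this joint
   probability is M f'_2(L) because M = P(s_1 = k) = P(s_0 = k).  Finally
   {Sp_{k,n} = L} is the disjoint union over i < L of {X = -i, Y = L - i},
   each a shift of the same joint event, so f'_1(L) = L (-Delta g'(L)). *)

Lemma odd_absz_addr1 (a : int) : odd `|(a + 1)%R|%N = ~~ odd `|a|%N.
Proof. by case: a => [a | [|a]] //=; rewrite ?addn1 ?subn1 //= negbK. Qed.

Lemma forall_pos_ordE L (P : nat -> bool) :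
  [forall j : 'I_L, (0 < j) ==> P j] = all P (iota 1 L.-1).
Proof.
apply/forallP/allP => [P_pos j | P_iota j].
  rewrite mem_iota => /andP[j_gt0 lt_jL1]; have lt_jL : j < L by lia.
  by have := P_pos (Ordinal lt_jL); rewrite /= j_gt0.
by apply/implyP => j_gt0; apply: P_iota; rewrite mem_iota; have := ltn_ord j; lia.
Qed.

Lemma mulr_div_dominated (F : fieldType) (x y : F) :
  (x = 0 -> y = 0)%R -> (x * (y / x) = y)%R.
Proof.
have [-> /(_ erefl) -> | x_neq0 _] := eqVneq x 0%R; first by rewrite mul0r.
by rewrite mulrC divfK.
Qed.

Lemma Zp_opp_inj n : injective (@Zp_opp n).
Proof.
move=> [x lt_xn] [y lt_yn] /(congr1 val) /= eq_opp; apply: val_inj => /=.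
by move: eq_opp; case: (posnP x) => [-> | x_gt0]; case: (posnP y) => [-> | y_gt0];
  rewrite ?subn0 ?modnn ?modn_small //; lia.
Qed.

Lemma val_Zp_opp n (x : 'I_n) : 0 < x -> Zp_opp x = n - x :> nat.
Proof. by move=> x_gt0; rewrite /= modn_small //; have := ltn_ord x; lia. Qed.

Lemma tau_posK i : involutive (tau_pos i).
Proof. by move=> j; rewrite /tau_pos; repeat case: eqP => //=; lia. Qed.

Lemma tau_pos_lt i j m : i < m -> j < m -> tau_pos i j < m.
Proof. by rewrite /tau_pos; repeat case: eqP => //=; lia. Qed.

Lemma foldr_tau_pos_lt s j m : all (fun i => i < m) s -> j < m -> foldr tau_pos j s < m.
Proof. by elim: s => //= i s IH /andP[lt_im /IH lt_sm] /lt_sm; apply: tau_pos_lt. Qed.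

(* Conjugation by the reversal of positions [j |-> n.-1 - j] exchanges
   [tau_x] and [tau_(n - x)]. *)
Lemma tau_pos_rev n x j : 0 < x < n -> j < n ->
  tau_pos x (n.-1 - tau_pos (n - x) j) = n.-1 - j.
Proof. by rewrite /tau_pos; repeat case: eqP => //=; lia. Qed.

Lemma size_swap_adj l i : size (swap_adj l i) = size l.
Proof. by rewrite size_map size_iota. Qed.

Lemma nth_swap_adj l i j : j < size l ->
  nth 0 (swap_adj l i) j = nth 0 l (tau_pos i j).
Proof. by move=> lt_jl; rewrite (nth_map 0) ?size_iota // nth_iota. Qed.

Lemma size_foldl_swap_adj l s : size (foldl swap_adj l s) = size l.
Proof. by elim: s l => //= i s IH l; rewrite IH size_swap_adj. Qed.

Lemma nth_foldl_swap_adj l s j :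
  all (fun i => i < size l) s -> j < size l ->
  nth 0 (foldl swap_adj l s) j = nth 0 l (foldr tau_pos j s).
Proof.
elim: s l => //= i s IH l /andP[_ lt_sl] lt_jl.
rewrite IH ?size_swap_adj // nth_swap_adj //.
exact: foldr_tau_pos_lt.
Qed.

Lemma word_of_revP n s : all (fun i => i < n) s ->
  (word_of n s == rev (iota 1 n)) = [forall j : 'I_n, foldr tau_pos j s == n.-1 - j].
Proof.
move=> lt_sn; have size_l : size (iota 1 n) = n by rewrite size_iota.
have nth_word j : j < n -> nth 0 (word_of n s) j = (foldr tau_pos j s).+1.
  move=> lt_jn; rewrite /word_of nth_foldl_swap_adj ?size_l // nth_iota ?add1n //.
  exact: foldr_tau_pos_lt.
have nth_rev j : j < n -> nth 0 (rev (iota 1 n)) j = n - j.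
  by move=> lt_jn; rewrite nth_rev size_l // nth_iota; lia.
apply/eqP/forallP => [word_rev j | foldr_rev].
  have := nth_word _ (ltn_ord j); rewrite word_rev nth_rev //; lia.
apply: (@eq_from_nth _ 0) => [|j]; first by rewrite size_foldl_swap_adj size_rev.
rewrite size_foldl_swap_adj size_l => lt_jn.
by rewrite nth_word // nth_rev // (eqP (foldr_rev (Ordinal lt_jn))) /=; lia.
Qed.

Section Rotation.

Context {n : nat}.

(* [Zp_opp x] is [n - x] on the nonzero letters of a sorting network. *)
Definition rotate_seq (s : seq 'I_n) : seq 'I_n :=
  if s is x :: s' then rcons s' (Zp_opp x) else [::].

Lemma size_rotate_seq s : size (rotate_seq s) = size s.
Proof. by case: s => //= x s; rewrite size_rcons. Qed.

Lemma rotate_subproof (w : (NN n).-tuple 'I_n) : size (rotate_seq w) == NN n.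
Proof. by rewrite size_rotate_seq size_tuple. Qed.

Definition rotate w := Tuple (rotate_subproof w).

Lemma rotate_inj : injective rotate.
Proof.
move=> [[|x1 s1] sz1] [[|x2 s2] sz2] /(congr1 val) /=.
- by move=> _; apply: val_inj.
- by move/(congr1 size); rewrite size_rcons.
- by move/(congr1 size); rewrite size_rcons.
- move/rcons_inj=> [eq_s eq_opp]; apply: val_inj; rewrite /= eq_s.
  by congr (_ :: _); apply: Zp_opp_inj; apply: val_inj.
Qed.

Lemma map_val_rotate_seq (x : 'I_n) s : 0 < x ->
  map val (rotate_seq (x :: s)) = rcons (map val s) (n - x).
Proof. by move=> x_gt0; rewrite /= map_rcons val_Zp_opp. Qed.

(* [tau_(s_2) ... tau_(s_N) tau_(n - s_1) = tau_(s_1) w0 tau_(n - s_1) = w0]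
   for the reversal [w0], by [tau_pos_rev]. *)
Lemma rotate_Omega w : w \in Omega n -> rotate w \in Omega n.
Proof.
have val_lt (t : seq 'I_n) : all (fun i => i < n) (map val t).
  by apply/allP => _ /mapP[i _ ->]; apply: ltn_ord.
rewrite !inE /is_sorting_network /rotate /=; case: (tval w) => [|x s] //.
rewrite /= => /andP[/andP[x_gt0 s_gt0]].
rewrite -[_ :: _]/(map val (x :: s)) word_of_revP ?val_lt //= => /forallP w0.
have lt_xn := ltn_ord x.
rewrite all_rcons s_gt0 val_Zp_opp // subn_gt0 lt_xn /=.
rewrite word_of_revP ?val_lt //; apply/forallP=> j.
rewrite map_rcons foldr_rcons val_Zp_opp //.
have lt_yn : tau_pos (n - x) j < n by apply: tau_pos_lt; [lia | exact: ltn_ord].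
have /eqP/(congr1 (tau_pos x)) := w0 (Ordinal lt_yn); rewrite tau_posK /= => ->.
by rewrite tau_pos_rev ?x_gt0.
Qed.

Lemma rotate_Omega_eq : rotate @: Omega n = Omega n.
Proof.
apply/eqP; rewrite eqEcard card_imset ?leqnn ?andbT; last exact: rotate_inj.
by apply/subsetP => _ /imsetP[w wO ->]; apply: rotate_Omega.
Qed.

End Rotation.

Section Stationarity.

Variable n : nat.
Hypothesis N_gt0 : 0 < NN n.
Local Notation N := (Posz (NN n)).

Lemma extE (w : (NN n).-tuple 'I_n) (q : int) r : r < NN n ->
  ext n w (q * N + r%:Z + 1)%R =
  if odd `|q|%N then n - nth 0 (map val w) r else nth 0 (map val w) r.
Proof.
move=> lt_rN; have N_neq0 : N != 0%R by rewrite eqz_nat -lt0n.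
rewrite /ext addrK divzMDl // divz_small ?addr0 ?modzMDl ?modz_small //;
  by apply/andP; split; lia.
Qed.

Lemma ext_rotate w t : w \in Omega n -> ext n (rotate w) t = ext n w (t + 1)%R.
Proof.
have [q [r [lt_rN ->]]] :
    exists (q : int) (r : nat), r < NN n /\ t = (q * N + r%:Z + 1)%R.
  exists ((t - 1) %/ N)%Z, `|((t - 1) %% N)%Z|%N.
  have N_neq0 : N != 0%R by rewrite eqz_nat -lt0n.
  rewrite -ltz_nat gez0_abs ?modz_ge0 // ltz_pmod ?ltz_nat //.
  by split=> //; rewrite -divz_eq subrK.
case: w => [[|x s] sz_w]; first by exfalso; move: (N_gt0); rewrite -(eqP sz_w).
rewrite inE /is_sorting_network /= => /andP[/andP[x_gt0 _] _].
have size_s : size s = (NN n).-1 by move: sz_w => /eqP/= <-.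
rewrite extE // map_val_rotate_seq //.
have [lt_r1N | ge_r1N] := ltnP r.+1 (NN n).
  have -> : (q * N + r%:Z + 1 + 1 = q * N + r.+1%:Z + 1)%R by rewrite intS; ring.
  have lt_r_size : r < (NN n).-1 by lia.
  by rewrite extE // nth_rcons size_map size_s lt_r_size.
have r_last : r = (NN n).-1 by lia.
have -> : (q * N + r%:Z + 1 + 1 = (q + 1) * N + 0%N%:Z + 1)%R.
  have N_succ : N = ((NN n).-1%:Z + 1)%R by rewrite -[in LHS](prednK N_gt0) intS addrC.
  by rewrite r_last N_succ; ring.
rewrite extE // nth_rcons size_map size_s r_last ltnn eqxx odd_absz_addr1.
by case: (odd `|q|%N) => //=; have := ltn_ord x; lia.
Qed.

Lemma ext_iter_rotate i w t : w \in Omega n ->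
  ext n (iter i rotate w) t = ext n w (t + i%:Z)%R.
Proof.
move=> wO; elim: i t => [|i IH] t /=; first by rewrite addr0.
rewrite ext_rotate ?IH; last by elim: i {IH} => //= i /rotate_Omega.
by rewrite intS addrA.
Qed.

End Stationarity.

Section UniformProbability.

Context {n : nat}.
Implicit Types E F : pred ((NN n).-tuple 'I_n).

Lemma eq_Pr_in E F : {in Omega n, E =1 F} -> Pr E = Pr F.
Proof.
move=> eqEF; rewrite /Pr; congr (_%:R / _)%R; apply: eq_card => w.
by rewrite !inE; apply: andb_id2l => wO; apply: eqEF; rewrite inE.
Qed.

Lemma Pr_ge0 E : (0 <= Pr E)%R.
Proof. by rewrite /Pr divr_ge0. Qed.

Lemma Pr_le_in E F : {in Omega n, subpred E F} -> (Pr E <= Pr F)%R.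
Proof.
move=> subEF; rewrite /Pr ler_wpM2r ?invr_ge0 // ler_nat.
apply/subset_leq_card/subsetP => w; rewrite !inE => /andP[wO Ew].
by rewrite wO subEF // inE.
Qed.

Lemma PrID E F : Pr E = (Pr (predI E F) + Pr (predI E (predC F)))%R.
Proof.
rewrite /Pr -mulrDl -natrD -(cardsID [set w | F w]); congr (_%:R / _)%R.
by congr (_ + _); apply: eq_card => w; rewrite !inE /=;
  case: (E w); case: (F w); rewrite ?andbT ?andbF.
Qed.

Lemma Pr_exists_disjoint L (E : 'I_L -> pred ((NN n).-tuple 'I_n)) :
    (forall w i j, E i w -> E j w -> i = j) ->
  Pr (fun w => [exists i, E i w]) = (\sum_(i < L) Pr (E i))%R.
Proof.
move=> E_uniq; rewrite /Pr -mulr_suml -natr_sum; congr (_%:R / _)%R.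
have -> : [set w in Omega n | [exists i, E i w]] =
          \bigcup_(i < L) [set w in Omega n | E i w].
  apply/setP => w; rewrite inE; apply/andP/bigcupP => [[wO /existsP[i Ei]] | [i _]].
    by exists i; rewrite // inE wO.
  by rewrite inE => /andP[wO Ei]; split=> //; apply/existsP; exists i.
rewrite -sum1_card partition_disjoint_bigcup => [|i j neq_ij].
  by apply: eq_bigr => i _; rewrite sum1_card.
rewrite -setI_eq0; apply/eqP/setP => w; rewrite !inE.
by apply/negP => /andP[/andP[_ Ei] /andP[_ /(E_uniq w i j Ei) eq_ij]]; case/eqP: neq_ij.
Qed.

Lemma Pr_rotate E : Pr (fun w => E (rotate w)) = Pr E.
Proof.
rewrite /Pr -(card_imset _ (@rotate_inj n)); congr (_%:R / _)%R; apply: eq_card => w.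
apply/imsetP/setIdP => [[v /setIdP[vO Erv] ->] | [wO Ew]].
  by split; [apply: rotate_Omega|].
move: wO; rewrite -{1}rotate_Omega_eq => /imsetP[v vO eq_w].
by exists v => //; apply/setIdP; rewrite -eq_w.
Qed.

Lemma Pr_iter_rotate i E : Pr (fun w => E (iter i rotate w)) = Pr E.
Proof.
elim: i => // i IH; rewrite -IH -(Pr_rotate (fun w => E (iter i rotate w))).
by apply: eq_Pr_in => w _; rewrite iterSr.
Qed.

End UniformProbability.

Section Events.

Variables n k L : nat.

(* [Sp_event n k L w] is convertible to [[exists i, Sp_event_at i w]]. *)
Definition Sp_event_at (i : 'I_L) (w : (NN n).-tuple 'I_n) : bool :=
  let X := (- (i%:Z))%R in
  [&& ext n w X == k, ext n w (X + L%:Z)%R == k &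
      [forall j : 'I_L, (0 < j)%N ==> (ext n w (X + j%:Z)%R != k)]].

Lemma Sp_event_at_uniq w (i j : 'I_L) :
  Sp_event_at i w -> Sp_event_at j w -> i = j.
Proof.
wlog le_ij : i j / i <= j.
  move=> wlog_ij Ei Ej; case: (leqP i j) => [|/ltnW] /wlog_ij; first exact.
  by move/(_ Ej Ei).
case/and3P=> hit_i _ _ /and3P[_ _ /forallP no_hit_j]; apply: val_inj; apply/eqP.
rewrite eqn_leq le_ij leqNgt; apply/negP => lt_ij.
have lt_jiL : j - i < L by have := ltn_ord j; lia.
have := no_hit_j (Ordinal lt_jiL); rewrite /= subn_gt0 lt_ij /=.
by rewrite -subzn // addKr hit_i.
Qed.

Hypothesis N_gt0 : 0 < NN n.

Lemma Mk_s0 : Mk n k = Pr (fun w => ext n w 0 == k).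
Proof.
by rewrite /Mk -[RHS]Pr_rotate; apply: eq_Pr_in => w wO; rewrite /= ext_rotate // add0r.
Qed.

Lemma Sp_event_at_iter_rotate (i : 'I_L) w : w \in Omega n ->
  Sp_event_at i (iter i rotate w) = Sphat_joint_event n k L w.
Proof.
have shift_back t : (- i%:Z + t + i%:Z = t)%R by rewrite addrAC addNr add0r.
move=> wO; rewrite /Sp_event_at !ext_iter_rotate // addNr !shift_back.
by congr [&& _, _ & _]; apply: eq_forallb => j; rewrite ext_iter_rotate // shift_back.
Qed.

Lemma f1_Sphat : f1 n k L = (L%:R * Pr (Sphat_joint_event n k L))%R.
Proof.
rewrite /f1 (@Pr_exists_disjoint n L Sp_event_at); last exact: Sp_event_at_uniq.
rewrite (eq_bigr (fun _ => Pr (Sphat_joint_event n k L))) => [|i _].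
  by rewrite sumr_const card_ord mulr_natl.
rewrite -(Pr_iter_rotate i); apply: eq_Pr_in => w wO; exact: Sp_event_at_iter_rotate.
Qed.

Hypothesis L_gt0 : 0 < L.

Lemma TFS_event_s0 w :
  TFS_event n k L w && (ext n w 0 == k) = Sphat_joint_event n k L w.
Proof. by rewrite /TFS_event L_gt0 andbC. Qed.

Lemma TFS_event_rotate w : w \in Omega n ->
  TFS_event n k L (rotate w) && (ext n (rotate w) 0 != k) = TFS_event n k L.+1 w.
Proof.
move=> wO; case: L L_gt0 => // m _; rewrite /TFS_event.
rewrite !(forall_pos_ordE _ (fun j => ext n _ j != k)) /= !ext_rotate //.
have -> : all (fun j : nat => ext n (rotate w) j%:Z != k) (iota 1 m) =
          all (fun j : nat => ext n w j%:Z != k) (iota 2 m).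
  rewrite -[2]/(1 + 1) iotaDl all_map; apply: eq_all => j /=.
  by rewrite ext_rotate // intS addrC.
rewrite add0r [(_ + 1)%R]addrC -intS.
by case: (ext n w m.+2 == k); rewrite //= andbC.
Qed.

Lemma g_split : g n k L = (Pr (Sphat_joint_event n k L) + g n k L.+1)%R.
Proof.
rewrite /g (PrID _ (fun w => ext n w 0 == k)); congr (_ + _)%R.
  by apply: eq_Pr_in => w _; rewrite /= TFS_event_s0.
by rewrite -Pr_rotate; apply: eq_Pr_in => w wO; apply: TFS_event_rotate.
Qed.

End Events.

Theorem proposition4p6 (n k L : nat) :
  (2 <= n)%N -> (1 <= k)%N -> (k <= n - 1)%N -> (1 <= L)%N ->
  (- (g n k L.+1 - g n k L) * L%:R = f1 n k L)%R /\
  (- (g n k L.+1 - g n k L) = Mk n k * f2 n k L)%R.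
Proof.
move=> n_ge2 _ _ L_gt0; have N_gt0 : 0 < NN n by rewrite bin_gt0.
have -> : (- (g n k L.+1 - g n k L) = Pr (Sphat_joint_event n k L))%R.
  by rewrite (g_split n k L N_gt0 L_gt0); ring.
split; first by rewrite (f1_Sphat n k L N_gt0) mulrC.
rewrite /f2 (Mk_s0 n k N_gt0) mulr_div_dominated // => s0_null.
apply/eqP; rewrite eq_le Pr_ge0 andbT -s0_null.
by apply: Pr_le_in => w _ /and3P[].
Qed.
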